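(* For any finite abstract simplicial complex $G$, $\sum_{x\in G}\omega(x)\chi(S(x))=0$.
   Context: A finite abstract simplicial complex $G$ is a finite set of non-empty finite sets closed under taking non-empty subsets; $\omega(x)=(-1)^{|x|-1}$. The graph $G_1$ has vertex set $G$, with $x\neq y$ adjacent iff $x\subset y$ or $y\subset x$. $S(x)=\{y\in G: y\subsetneq x\text{ or }x\subsetneq y\}$, and $\chi(S(x))$ is the Euler characteristic $\sum_K(-1)^{|K|-1}$ over non-empty cliques $K$ of the subgraph of $G_1$ induced on $S(x)$. *)

From mathcomp Require Import all_boot all_order all_algebra.
Set Implicit Arguments. Unset Strict Implicit. Unset Printing Implicit Defensive.
Import GRing.Theory Num.Theory.
Local Open Scope ring_scope.

Definition is_complex (T : finType) (G : {set {set T}}) : Prop :=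
  set0 \notin G /\
  forall x y : {set T}, x \in G -> y \subset x -> y != set0 -> y \in G.

Definition omega (T : finType) (x : {set T}) : int := (-1) ^+ (#|x|.-1).

(* adjacency in G_1 : distinct and comparable by inclusion *)
Definition adj1 (T : finType) (x y : {set T}) : bool :=
  (x != y) && ((x \subset y) || (y \subset x)).

(* the unit sphere S(x) in G_1 *)
Definition Sph (T : finType) (G : {set {set T}}) (x : {set T}) : {set {set T}} :=
  [set y in G | (y \proper x) || (x \proper y)].

Definition is_clique (T : finType) (A K : {set {set T}}) : bool :=
  (K \subset A) && [forall a in K, forall b in K, (a != b) ==> adj1 a b].

(* Euler characteristic of the subgraph of G_1 induced on A:
   sum over non-empty cliques K of (-1)^(|K|-1) *)
Definition chi (T : finType) (A : {set {set T}}) : int :=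
  \sum_(K : {set {set T}} | (K != set0) && is_clique A K) (-1) ^+ (#|K|.-1).

From Pilot Require Import Defs.
From mathcomp Require Import all_boot all_order all_algebra.
Set Implicit Arguments. Unset Strict Implicit. Unset Printing Implicit Defensive.
Import GRing.Theory Num.Theory.
Local Open Scope ring_scope.

(* Write F(A) for the signed count (-1)^|K| of the chains K of a finite poset A,
   the empty chain included, so that chi = 1 - F on comparability graphs.
   Sorting the non-empty chains by their minimum gives, for every finite poset,
   sum_{x in A} F(A_{>x}) = 1 - F(A).  The sphere S(x) is the join of the faces
   D(x) below x and the faces U(x) above x, so F(S(x)) = F(D(x)) F(U(x)), and the
   recursion for the dual order shows by induction that the boundary D(x) of a
   simplex has F(D(x)) = omega(x).  Hence omega(x) chi(S(x)) = omega(x) - F(U(x)),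
   and both sum_x omega(x) = sum_x F(D(x)) and sum_x F(U(x)) equal 1 - F(G), by
   the recursion for G ordered by reverse inclusion and by inclusion. *)

Lemma sign_setU1 (X : finType) (x : X) (L : {set X}) :
  x \notin L -> (-1) ^+ #|x |: L| = - (-1) ^+ #|L| :> int.
Proof. by move=> xL; rewrite cardsU1 xL exprS mulN1r. Qed.

Lemma sign_pred (n : nat) : (0 < n)%N -> (-1) ^+ n.-1 = - (-1) ^+ n :> int.
Proof. by case: n => // n _; rewrite exprS mulN1r opprK. Qed.

Definition partial_order (X : Type) (le : rel X) : Prop :=
  [/\ reflexive le, antisymmetric le & transitive le].

Section ChainSum.

Variables (X : finType) (le : rel X).

Definition chain (K : {set X}) : bool :=
  [forall a in K, forall b in K, le a b || le b a].

Definition chain_in (A K : {set X}) : bool := (K \subset A) && chain K.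

Definition chain_sum (A : {set X}) : int :=
  \sum_(K | chain_in A K) (-1) ^+ #|K|.

Definition strict_up (A : {set X}) (x : X) : {set X} :=
  [set y in A | le x y && (y != x)].

Definition is_min (x : X) (K : {set X}) : bool :=
  (x \in K) && [forall y in K, le x y].

Lemma chain_sub (K' K : {set X}) : K' \subset K -> chain K -> chain K'.
Proof.
move=> sK /forall_inP cK; apply/forall_inP => a aK; apply/forall_inP => b bK.
exact: (forall_inP (cK a (subsetP sK a aK))) b (subsetP sK b bK).
Qed.

Lemma chain_sumE (A : {set X}) :
  chain_sum A = 1 + \sum_(K | (K != set0) && chain_in A K) (-1) ^+ #|K|.
Proof.
rewrite /chain_sum (bigD1 set0) /= ?cards0; last first.
  by rewrite /chain_in sub0set; apply/forall_inP => a; rewrite inE.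
congr (_ + _); apply: eq_bigl => K; exact: andbC.
Qed.

Lemma chain_sum_join (D U : {set X}) :
  (forall d u, d \in D -> u \in U -> le d u && (d != u)) ->
  chain_sum (D :|: U) = chain_sum D * chain_sum U.
Proof.
move=> DU.
have DU_disj z : z \in D -> z \in U -> False.
  by move=> zD zU; move: (DU z z zD zU); rewrite eqxx andbF.
rewrite /chain_sum big_distrlr /= pair_big_dep /=.
rewrite (reindex_onto (fun p : {set X} * {set X} => p.1 :|: p.2)
                      (fun K => (K :&: D, K :&: U))) /=; last first.
  by move=> K /andP[sK _]; rewrite -setIUr; apply/setIidPl.
apply: eq_big => [[K1 K2]|[K1 K2]] /=.
  apply/idP/idP.
    case/andP => [/andP[_ cK] /eqP [e1 e2]].
    rewrite /chain_in (chain_sub (subsetUl _ _) cK) (chain_sub (subsetUr _ _) cK).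
    by rewrite -{1}e2 -{1}e1 !subsetIr.
  case/andP => [/andP[s1 c1] /andP[s2 c2]].
  have e1 : (K1 :|: K2) :&: D = K1.
    rewrite setIUl (setIidPl s1); apply/setUidPl/subsetP => z.
    by rewrite inE => /andP[/(subsetP s2) zU /DU_disj]; case.
  have e2 : (K1 :|: K2) :&: U = K2.
    rewrite setIUl (setIidPl s2); apply/setUidPr/subsetP => z.
    by rewrite inE => /andP[/(subsetP s1) zD zU]; case: (DU_disj z zD zU).
  rewrite e1 e2 eqxx andbT /chain_in setUSS //=.
  apply/forall_inP => a /setUP[aK|aK]; apply/forall_inP => b /setUP[bK|bK].
  - exact: (forall_inP (forall_inP c1 a aK)) b bK.
  - by case/andP: (DU a b (subsetP s1 a aK) (subsetP s2 b bK)) => ->.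
  - by case/andP: (DU b a (subsetP s1 b bK) (subsetP s2 a aK)) => ->; rewrite orbT.
  - exact: (forall_inP (forall_inP c2 a aK)) b bK.
case/andP=> _ /eqP[e1 e2].
have s1 : K1 \subset D by rewrite -e1 subsetIr.
have s2 : K2 \subset U by rewrite -e2 subsetIr.
have K12 : K1 :&: K2 = set0.
  apply/setP => z; rewrite !inE; apply/negP => /andP[z1 z2].
  exact: DU_disj (subsetP s1 z z1) (subsetP s2 z z2).
by rewrite cardsU K12 cards0 subn0 exprD.
Qed.

Hypothesis le_order : partial_order le.

Lemma chain_has_min (K : {set X}) :
  K != set0 -> chain K -> exists x, is_min x K.
Proof.
have [le_refl _ le_trans] := le_order.
have [n] := ubnP #|K|; elim: n K => // n IH K ltKn /set0Pn[a aK] cK.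
have [Ka0|/IH[||m /andP[mKa min_m]]] := eqVneq (K :\ a) set0.
- exists a; rewrite /is_min aK; apply/forall_inP => y yK.
  have [-> //|ya] := eqVneq y a.
  have : y \in K :\ a by rewrite !inE ya.
  by rewrite Ka0 inE.
- by rewrite -ltnS (leq_trans _ ltKn) // (cardsD1 a K) aK.
- exact: chain_sub (subsetDl K _) cK.
have mK : m \in K by move: mKa; rewrite inE => /andP[].
have [ma|ma] := boolP (le m a).
  exists m; rewrite /is_min mK; apply/forall_inP => y yK.
  by have [->|ya] := eqVneq y a; last by apply: (forall_inP min_m); rewrite !inE ya.
have am : le a m by move: (forall_inP (forall_inP cK a aK) m mK); rewrite (negbTE ma) orbF.
exists a; rewrite /is_min aK; apply/forall_inP => y yK.
have [->|ya] := eqVneq y a; first exact: le_refl.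
by apply: le_trans am _; apply: (forall_inP min_m); rewrite !inE ya.
Qed.

Lemma chain_in_strict_up (A : {set X}) (x : X) (L : {set X}) : x \in A ->
  chain_in (strict_up A x) L = [&& x \notin L, chain_in A (x |: L) & is_min x (x |: L)].
Proof.
have [le_refl _ _] := le_order.
move=> xA; apply/idP/and3P => [/andP[/subsetP sL cL]|[xL /andP[sxL cxL] /andP[_ min_x]]].
  have upL y : y \in L -> [&& y \in A, le x y & y != x].
    by move=> /sL; rewrite inE.
  split.
  - by apply/negP => /upL; rewrite eqxx !andbF.
  - rewrite /chain_in subUset sub1set xA /=; apply/andP; split.
      by apply/subsetP => y /upL /andP[].
    apply/forall_inP => a /setU1P[->|aL]; apply/forall_inP => b /setU1P[->|bL].
    + by rewrite le_refl.
    + by case/and3P: (upL b bL) => _ ->.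
    + by case/and3P: (upL a aL) => _ ->; rewrite orbT.
    + exact: (forall_inP (forall_inP cL a aL)).
  - rewrite /is_min setU11; apply/forall_inP => y /setU1P[->|/upL/and3P[] //].
    exact: le_refl.
apply/andP; split; last exact: chain_sub (subsetUr _ _) cxL.
apply/subsetP => y yL; rewrite inE (subsetP sxL) ?setU1r //.
rewrite (forall_inP min_x) ?setU1r //=.
by apply: contraNneq xL => <-.
Qed.

Lemma sum_chains_with_min (A : {set X}) (x : X) : x \in A ->
  \sum_(K | chain_in A K && is_min x K) (-1) ^+ #|K| = - chain_sum (strict_up A x).
Proof.
move=> xA; rewrite /chain_sum -sumrN.
rewrite (reindex_onto (fun L => x |: L) (fun K => K :\ x)) /=; last first.
  by move=> K /andP[_ /andP[xK _]]; rewrite setD1K.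
apply: eq_big => [L|L].
  rewrite chain_in_strict_up // andbC andbA.
  have [xL|xL] := boolP (x \in L); last by rewrite setU1K ?eqxx.
  rewrite /=; apply/negbTE/negP => /andP[/andP[/eqP eL _] _].
  by move: xL; rewrite -eL setD11.
case/andP => _ /eqP eL.
by rewrite sign_setU1 // -eL setD11.
Qed.

Lemma sum_chain_sum_strict_up (A : {set X}) :
  \sum_(x in A) chain_sum (strict_up A x) = 1 - chain_sum A.
Proof.
rewrite chain_sumE opprD addNKr; apply: oppr_inj; rewrite opprK -sumrN; symmetry.
have min_unique K : K != set0 -> chain_in A K ->
    \sum_(x in A | is_min x K) (-1) ^+ #|K| = (-1) ^+ #|K| :> int.
  move=> K0 /andP[sKA cK]; have [m min_m] := chain_has_min K0 cK.
  have [_ le_anti _] := le_order.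
  rewrite (big_pred1 m) // => x; apply/andP/eqP => [[_ min_x]|->].
    case/andP: min_x => xK /forall_inP min_x; case/andP: min_m => mK /forall_inP min_m.
    by apply: le_anti; rewrite min_x ?min_m.
  by rewrite min_m (subsetP sKA) //; case/andP: min_m.
transitivity (\sum_(K | (K != set0) && chain_in A K)
                \sum_(x in A | is_min x K) (-1) ^+ #|K| : int).
  by apply: eq_bigr => K /andP[K0 cK]; rewrite min_unique.
rewrite (exchange_big_dep (mem A)) /=; last by move=> K x _ /andP[].
apply: eq_bigr => x xA; rewrite -sum_chains_with_min //; apply: eq_bigl => K.
have min_nonempty : is_min x K -> K != set0.
  by case/andP=> xK _; apply/set0Pn; exists x.
by rewrite xA; case: (boolP (is_min x K)) => [/min_nonempty ->|]; rewrite ?andbT ?andbF.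
Qed.

End ChainSum.

Definition rev_rel (X : Type) (le : rel X) : rel X := fun a b => le b a.

Lemma rev_rel_order (X : Type) (le : rel X) :
  partial_order le -> partial_order (rev_rel le).
Proof.
case=> le_refl le_anti le_trans; split=> // [a b|b a c ba cb].
  by rewrite andbC => /le_anti.
exact: le_trans cb ba.
Qed.

Lemma chain_rev (X : finType) (le : rel X) (K : {set X}) :
  chain (rev_rel le) K = chain le K.
Proof. by apply: eq_forallb_in => a _; apply: eq_forallb_in => b _; rewrite orbC. Qed.

Lemma chain_sum_rev (X : finType) (le : rel X) (A : {set X}) :
  chain_sum (rev_rel le) A = chain_sum le A.
Proof. by apply: eq_bigl => K; rewrite /chain_in chain_rev. Qed.

Section Faces.

Variable T : finType.

Definition subset_rel : rel {set T} := fun a b => a \subset b.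

Lemma subset_rel_order : partial_order subset_rel.
Proof.
split=> [a|a b /andP[ab ba]|b a c]; first exact: subxx.
  by apply/eqP; rewrite eqEsubset; apply/andP.
exact: subset_trans.
Qed.

Lemma sum_sign_subsets (x : {set T}) :
  x != set0 -> \sum_(y : {set T} | y \subset x) (-1) ^+ #|y| = 0%R :> int.
Proof.
case/set0Pn => v vx; rewrite (bigID (fun y : {set T} => v \in y)) /=.
rewrite (reindex_onto (fun z => v |: z) (fun y => y :\ v)) /=; last first.
  by move=> y /andP[_ vy]; rewrite setD1K.
rewrite -[X in _ + X]opprK -sumrN; apply/eqP; rewrite subr_eq0; apply/eqP.
apply: eq_big => [z|z /andP[_ /eqP <-]]; last by rewrite sign_setU1 ?setD11.
rewrite setU11 andbT subUset sub1set vx /=.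
have [vz|vz] := boolP (v \in z); last by rewrite setU1K ?eqxx ?andbT.
rewrite andbF; apply/negbTE/andP => -[_ /eqP ez].
by move: vz; rewrite -ez setD11.
Qed.

Definition proper_faces (x : {set T}) : {set {set T}} :=
  [set y : {set T} | (y \proper x) && (y != set0)].

Lemma strict_up_rev_proper_faces (x y : {set T}) : y \in proper_faces x ->
  strict_up (rev_rel subset_rel) (proper_faces x) y = proper_faces y.
Proof.
rewrite inE => /andP[yx _]; apply/setP => z; rewrite !inE /rev_rel /subset_rel.
rewrite [z \proper y]properEneq andbC.
have [zy|] := boolP (z \subset y); rewrite ?andbF //= andbT.
by rewrite (sub_proper_trans zy yx) andbC.
Qed.

Lemma sum_omega_proper_faces (x : {set T}) :
  x != set0 -> \sum_(y in proper_faces x) omega y = 1 + (-1) ^+ #|x|.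
Proof.
move=> x0; have := sum_sign_subsets x0.
rewrite (bigD1 x) //= (bigD1 set0) /=; last by rewrite sub0set eq_sym.
rewrite cards0 expr0 addrA addrC => /eqP; rewrite addr_eq0 => /eqP sum_eq.
transitivity (- \sum_(y : {set T} | (y \subset x) && (y != x) && (y != set0))
                 (-1) ^+ #|y| : int); last by rewrite sum_eq opprK addrC.
rewrite -sumrN; apply: eq_big => [y|y].
  by rewrite inE properEneq (andbC (y != x)).
by rewrite inE => /andP[_ y0]; rewrite /omega sign_pred // card_gt0.
Qed.

Lemma chain_sum_proper_faces (x : {set T}) :
  x != set0 -> chain_sum subset_rel (proper_faces x) = omega x.
Proof.
have [n] := ubnP #|x|; elim: n x => // n IH x ltxn x0.
have := sum_chain_sum_strict_up (rev_rel_order subset_rel_order) (proper_faces x).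
rewrite chain_sum_rev (eq_bigr (@omega T)) => [|y yx]; last first.
  have := yx; rewrite inE => /andP[/proper_card ltyx y0].
  by rewrite strict_up_rev_proper_faces // chain_sum_rev IH // (leq_trans ltyx).
rewrite sum_omega_proper_faces // => /addrI sign_eq.
by rewrite /omega sign_pred ?card_gt0 // sign_eq opprK.
Qed.

Lemma is_clique_chain_in (A K : {set {set T}}) :
  is_clique A K = chain_in subset_rel A K.
Proof.
congr (_ && _); apply: eq_forallb_in => a _; apply: eq_forallb_in => b _.
by rewrite /Defs.adj1 /subset_rel; have [->|ab] := eqVneq a b; rewrite ?subxx.
Qed.

Lemma chi_chain_sum (A : {set {set T}}) : chi A = 1 - chain_sum subset_rel A.
Proof.
rewrite chain_sumE opprD addNKr -sumrN.
apply: eq_big => [K|K /andP[K0 _]]; first by rewrite is_clique_chain_in.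
by rewrite sign_pred // card_gt0.
Qed.

Lemma Sph_split (G : {set {set T}}) (x : {set T}) :
  Sph G x = strict_up (rev_rel subset_rel) G x :|: strict_up subset_rel G x.
Proof.
apply/setP => y; rewrite !inE /rev_rel /subset_rel !properEneq [x == y]eq_sym.
by case: (y \in G); case: (y == x); case: (y \subset x); case: (x \subset y).
Qed.

Lemma strict_up_rev_complex (G : {set {set T}}) (x : {set T}) :
  is_complex G -> x \in G -> strict_up (rev_rel subset_rel) G x = proper_faces x.
Proof.
move=> [G0 G_closed] xG; apply/setP => y; rewrite !inE /rev_rel /subset_rel.
rewrite properEneq andbC; have [->|y0] := eqVneq y set0.
  by rewrite (negbTE G0) !andbF.
rewrite andbT; have [yx|_] := boolP (y \subset x); last by rewrite /= !andbF.
by rewrite (G_closed x y) // andbT.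
Qed.

Lemma face_nonempty (G : {set {set T}}) (x : {set T}) :
  is_complex G -> x \in G -> x != set0.
Proof. by case=> G0 _ xG; apply: contraNneq G0 => <-. Qed.

Lemma omega_chi_Sph (G : {set {set T}}) (x : {set T}) : is_complex G -> x \in G ->
  omega x * chi (Sph G x) = omega x - chain_sum subset_rel (strict_up subset_rel G x).
Proof.
move=> cG xG.
have down_below_up d u : d \in strict_up (rev_rel subset_rel) G x ->
    u \in strict_up subset_rel G x -> subset_rel d u && (d != u).
  rewrite !inE /rev_rel /subset_rel => /and3P[_ dx dNx] /and3P[_ xu _].
  rewrite (subset_trans dx xu); apply: contra_neq dNx => du.
  by apply/eqP; rewrite eqEsubset dx du xu.
rewrite chi_chain_sum Sph_split chain_sum_join // strict_up_rev_complex //.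
rewrite chain_sum_proper_faces ?(face_nonempty cG) //.
by rewrite mulrBr mulr1 mulrA -expr2 /omega sqrr_sign mul1r.
Qed.

End Faces.

Theorem mainTheorem12 (T : finType) (G : {set {set T}}) :
  is_complex G ->
  \sum_(x in G) omega x * chi (Sph G x) = 0.
Proof.
move=> cG; rewrite (eq_bigr _ (fun _ => omega_chi_Sph cG)) sumrB.
have sum_omega : \sum_(x in G) omega x = 1 - chain_sum (@subset_rel T) G.
  rewrite -chain_sum_rev -(sum_chain_sum_strict_up (rev_rel_order (@subset_rel_order T))).
  apply: eq_bigr => x xG; rewrite strict_up_rev_complex // chain_sum_rev.
  by rewrite chain_sum_proper_faces // (face_nonempty cG).
by rewrite sum_omega -(sum_chain_sum_strict_up (@subset_rel_order T)) subrr.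
Qed.
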